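(* Let $n\ge 3$ and let $W_n$ be the web graph. Then its $b$-chromatic number satisfies $$\varphi(W_n)=\begin{cases}4 & \text{if } n=3,4,\\ 5 & \text{if } n\ge 5.\end{cases}$$
   Context: The web graph $W_n$ is obtained from the prism graph $C_n\Box P_2$ (two $n$-cycles $v_1\dots v_n$ and $u_1\dots u_n$ with $u_i$ adjacent to $v_i$ for each $i$) by attaching one pendant vertex to each vertex of one of the two cycles (the outer cycle $u_1\dots u_n$). A $b$-colouring of a graph $G$ with $k$ colours is a proper colouring $c:V(G)\to\{1,\dots,k\}$ such that for every colour $i$ there is a vertex of colour $i$ adjacent to a vertex of every colour $j\ne i$, $1\le j\le k$. The $b$-chromatic number $\varphi(G)$ is the maximum $k$ for which $G$ has a $b$-colouring with $k$ colours. *)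

From mathcomp Require Import all_boot.
Set Implicit Arguments. Unset Strict Implicit. Unset Printing Implicit Defensive.

(* A (simple) graph on a finite vertex type T is given by its adjacency
   relation [adj]; for the web graph it is symmetric and irreflexive. *)

Definition proper_colouring (T : finType) (adj : rel T) (k : nat)
  (c : T -> 'I_k) : Prop :=
  forall x y, adj x y -> c x != c y.

Definition b_colouring (T : finType) (adj : rel T) (k : nat)
  (c : T -> 'I_k) : Prop :=
  proper_colouring adj c /\
  forall i : 'I_k, exists x : T, c x = i /\
    forall j : 'I_k, j != i -> exists y : T, adj x y /\ c y = j.

Definition has_b_colouring (T : finType) (adj : rel T) (k : nat) : Prop :=
  exists c : T -> 'I_k, b_colouring adj c.

Definition b_chromatic_number_is (T : finType) (adj : rel T) (k : nat) : Prop :=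
  has_b_colouring adj k /\ forall k', has_b_colouring adj k' -> k' <= k.

(* Vertices (l, i) with l : 'I_3, i : 'I_n:
   l = 0 : inner cycle v_i;  l = 1 : outer cycle u_i;  l = 2 : pendant at u_i. *)
Definition cyc_adj (n : nat) (i j : 'I_n) : bool :=
  (j == (i.+1 %% n) :> nat) || (i == (j.+1 %% n) :> nat).

Definition web_adj (n : nat) : rel ('I_3 * 'I_n) :=
  fun x y =>
    let: (l1, i) := x in let: (l2, j) := y in
    [|| [&& l1 == l2, (l1 : nat) < 2 & cyc_adj i j],
        [&& i == j, (l1 : nat) == 0 & (l2 : nat) == 1],
        [&& i == j, (l1 : nat) == 1 & (l2 : nat) == 0],
        [&& i == j, (l1 : nat) == 1 & (l2 : nat) == 2]
      | [&& i == j, (l1 : nat) == 2 & (l2 : nat) == 1]].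

From mathcomp Require Import all_boot zify.
Set Implicit Arguments. Unset Strict Implicit. Unset Printing Implicit Defensive.

(* A colour class of a b-colouring with k colours contains a vertex of degree
   at least k - 1, and distinct colours give distinct such vertices.  In W_n
   every vertex has degree at most 4 and only the outer cycle has degree 4,
   so k <= 5, and k = 5 forces five distinct outer vertices, i.e. n >= 5.
   Conversely, explicit colourings realise 4 colours for n = 3, 4 and
   5 colours for n >= 5: for n >= 7 the outer vertices u_1..u_5 get colours
   0..4 and the rest of both cycles is filled with an alternating pattern. *)

(* [enum 'I_n] and [ord_enum n] go through [insub], which is stuck on the
   opaque [idP] under [vm_compute]; [ords] enumerates 'I_n computably. *)
Fixpoint ords n : seq 'I_n :=
  if n is n'.+1 then ord0 :: map (lift ord0) (ords n') else [::].

Lemma mem_ords n (i : 'I_n) : i \in ords n.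
Proof.
elim: n i => [[] // | n IHn] i; rewrite inE.
by case: (unliftP ord0 i) => [j -> | ->]; rewrite ?eqxx // (mem_map (@lift_inj _ _)) IHn orbT.
Qed.

Section BColouring.

Variables (T : finType) (adj : rel T).

Definition degree (x : T) : nat := #|[set y | adj x y]|.

Lemma b_vertex_degree k (c : T -> 'I_k) (x : T) :
  (forall j, j != c x -> exists y, adj x y /\ c y = j) -> k.-1 <= degree x.
Proof.
move=> bx; rewrite -[k]card_ord -(cardsC1 (c x)).
apply: leq_trans (leq_imset_card c _); apply: subset_leq_card.
apply/subsetP=> j; rewrite in_setC1 => /bx [y [xy <-]].
by apply: imset_f; rewrite inE.
Qed.

Lemma b_colouring_card_le k (c : T -> 'I_k) :
  b_colouring adj c -> k <= #|[set x | k.-1 <= degree x]|.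
Proof.
case=> _ bc; rewrite -{1}[k]card_ord -cardsT.
apply: leq_trans (leq_imset_card c _); apply: subset_leq_card.
apply/subsetP=> i _; have [x [cx bx]] := bc i.
by rewrite -cx imset_f // inE (b_vertex_degree (c := c)) // cx.
Qed.

Definition b_colouring_on (s : seq T) k (c : T -> 'I_k) : bool :=
  all (fun x => all (fun y => adj x y ==> (c x != c y)) s) s &&
  all (fun i => has (fun x => (c x == i) &&
         all (fun j => (j != i) ==> has (fun y => adj x y && (c y == j)) s) (ords k)) s)
    (ords k).

Lemma b_colouring_onP (s : seq T) k (c : T -> 'I_k) :
  (forall x, x \in s) -> b_colouring_on s c -> b_colouring adj c.
Proof.
move=> sT /andP [/allP pc /allP bc]; split.
  by move=> x y xy; have /allP/(_ y (sT y)) := pc x (sT x); rewrite xy.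
move=> i; have /hasP [x _ /andP [/eqP cx /allP bx]] := bc i (mem_ords i).
exists x; split=> // j ji; have := bx j (mem_ords j); rewrite ji.
by case/hasP=> y _ /andP [xy /eqP cy]; exists y.
Qed.

End BColouring.

Section WebGraph.

Variable n : nat.
Implicit Types (x y : 'I_3 * 'I_n) (i j : 'I_n).

Lemma cyc_adjE i j : cyc_adj i j = (j == ordS i) || (j == ord_pred i).
Proof.
by rewrite /cyc_adj -[j == ord_pred i](inj_eq (@ordS_inj n)) ord_predK [ordS j == i]eq_sym.
Qed.

Definition web_nbrs x : seq ('I_3 * 'I_n) :=
  let: (l, i) := x in
  match val l with
  | 0 => [:: (l, ordS i); (l, ord_pred i); (inord 1, i)]
  | 1 => [:: (l, ordS i); (l, ord_pred i); (inord 0, i); (inord 2, i)]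
  | _ => [:: (inord 1, i)]
  end.

Lemma web_adjE x y : web_adj x y = (y \in web_nbrs x).
Proof.
case: x y => [[[|[|[|//]]] hl] i] [[[|[|[|//]]] hl'] j];
  rewrite /web_adj cyc_adjE /web_nbrs /= !inE !xpair_eqE -!val_eqE /= ?inordK //.
all: by rewrite /= ?andbT ?andbF ?orbF ?orbA // eq_sym.
Qed.

Lemma web_degree_le x : degree (@web_adj n) x <= 3 + (val x.1 == 1).
Proof.
rewrite /degree; have -> : [set y | web_adj x y] = [set y in web_nbrs x].
  by apply/setP=> y; rewrite !inE web_adjE.
rewrite cardsE (leq_trans (card_size _)) //.
by case: x => [[[|[|[|//]]] hl] i].
Qed.

Lemma web_b_colouring_le5 k (c : 'I_3 * 'I_n -> 'I_k) :
  b_colouring (@web_adj n) c -> k <= 5.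
Proof.
move=> /b_colouring_card_le k_le; rewrite leqNgt; apply/negP => k_gt5.
suff S0 : [set x | k.-1 <= degree (@web_adj n) x] = set0.
  by move: k_le; rewrite S0 cards0; lia.
apply/setP=> x; rewrite !inE; apply/negbTE; rewrite -ltnNge.
have := web_degree_le x; case: (_ == 1) => /= deg_x; lia.
Qed.

Lemma web_b_colouring_le_n k (c : 'I_3 * 'I_n -> 'I_k) :
  b_colouring (@web_adj n) c -> 4 < k -> k <= n.
Proof.
move=> /b_colouring_card_le k_le k_gt4.
set S := [set x | _ <= _] in k_le; have outerS x : x \in S -> val x.1 = 1.
  rewrite inE => deg_x; have := web_degree_le x.
  by case: (val x.1 == 1) / eqP => //= _; lia.
apply: leq_trans k_le _; rewrite -[n in _ <= n]card_ord.
apply: (@leq_card_in _ _ snd (mem S)).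
move=> [l i] [l' i'] /outerS /= ol /outerS /= ol' /= ->.
by congr pair; apply: val_inj; rewrite /= ol ol'.
Qed.

Lemma web_b_chromatic_le k :
  has_b_colouring (@web_adj n) k -> k <= (if n <= 4 then 4 else 5).
Proof.
case=> c bc; case: ifP => [n_le4 | _]; last exact: web_b_colouring_le5 bc.
rewrite leqNgt; apply/negP => k_gt4; have := web_b_colouring_le_n bc k_gt4; lia.
Qed.

Definition web_vertices : seq ('I_3 * 'I_n) := [seq (l, i) | l <- ords 3, i <- ords n].

Lemma mem_web_vertices x : x \in web_vertices.
Proof. by case: x => l i; apply/allpairsP; exists (l, i); rewrite !mem_ords. Qed.

End WebGraph.

Definition table_colouring k (t : seq (seq nat)) n (x : 'I_3 * 'I_n) : 'I_k.+1 :=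
  nth ord0 (ords k.+1) (nth 0 (nth [::] t x.1) x.2).

Lemma web3_b_colouring : has_b_colouring (@web_adj 3) 4.
Proof.
exists (table_colouring 3 [:: [:: 1; 3; 0]; [:: 3; 1; 2]; [:: 0; 0; 0]] (n := 3)).
by apply: (b_colouring_onP (@mem_web_vertices 3)); vm_compute.
Qed.

Lemma web4_b_colouring : has_b_colouring (@web_adj 4) 4.
Proof.
exists (table_colouring 3 [:: [:: 1; 2; 1; 0]; [:: 3; 1; 0; 2]; [:: 0; 3; 3; 1]] (n := 4)).
by apply: (b_colouring_onP (@mem_web_vertices 4)); vm_compute.
Qed.

Lemma web5_b_colouring : has_b_colouring (@web_adj 5) 5.
Proof.
exists (table_colouring 4 [:: [:: 2; 3; 4; 0; 1]; [:: 0; 1; 2; 3; 4]; [:: 3; 4; 0; 1; 2]] (n := 5)).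
by apply: (b_colouring_onP (@mem_web_vertices 5)); vm_compute.
Qed.

Lemma web6_b_colouring : has_b_colouring (@web_adj 6) 5.
Proof.
exists (table_colouring 4
  [:: [:: 3; 4; 0; 1; 0; 1]; [:: 0; 1; 2; 3; 4; 2]; [:: 4; 3; 4; 0; 1; 0]] (n := 6)).
by apply: (b_colouring_onP (@mem_web_vertices 6)); vm_compute.
Qed.

Definition web_colour (l i : nat) : nat :=
  match l with
  | 0 => if i < 6 then nth 0 [:: 1; 2; 3; 4; 0; 2] i else if odd i then 4 else 0
  | 1 => if i < 6 then nth 0 [:: 3; 0; 1; 2; 3; 4] i else if odd i then 2 else 1
  | _ => nth 0 [:: 0; 4; 4; 0; 1] i
  end.

Lemma web_colour_lt5 l i : web_colour l i < 5.
Proof.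
by case: l => [|[|l]]; case: i => [|[|[|[|[|[|i]]]]]] //=; case: (odd i).
Qed.

Lemma web_colour_succ l i : l < 2 -> web_colour l i != web_colour l i.+1.
Proof.
by case: l => [|[|]] // _; case: i => [|[|[|[|[|[|i]]]]]] //=; case: (odd i).
Qed.

Lemma web_colour_wrap l i : l < 2 -> 6 <= i -> web_colour l i != web_colour l 0.
Proof.
by case: l => [|[|]] // _; case: i => [|[|[|[|[|[|i]]]]]] //= _; case: (odd i).
Qed.

Lemma web_colour_spoke i : web_colour 0 i != web_colour 1 i.
Proof. by case: i => [|[|[|[|[|[|i]]]]]] //=; case: (odd i). Qed.

Lemma web_colour_pendant i : web_colour 1 i != web_colour 2 i.
Proof. by case: i => [|[|[|[|[|[|i]]]]]] //=; case: (odd i). Qed.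

Lemma web_colour_outerS t : t < 5 -> web_colour 1 t.+1 = t.
Proof. by case: t => [|[|[|[|[|]]]]]. Qed.

Lemma web_colour_outer_nbrs t j :
  t < 5 -> j < 5 -> j != t ->
  j \in [:: web_colour 1 t.+2; web_colour 1 t; web_colour 0 t.+1; web_colour 2 t.+1].
Proof. by case: t => [|[|[|[|[|]]]]] //; case: j => [|[|[|[|[|]]]]]. Qed.

Section FiveColouring.

Variable n : nat.
Hypothesis n_gt6 : 6 < n.

Definition web_colouring (x : 'I_3 * 'I_n) : 'I_5 := Ordinal (web_colour_lt5 x.1 x.2).

Lemma web_colour_ordS l (i : 'I_n) : l < 2 -> web_colour l i != web_colour l (ordS i).
Proof.
move=> l_lt2 /=; case: (ltnP i.+1 n) => [i_lt | i_ge].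
  by rewrite modn_small // web_colour_succ.
have -> : i.+1 = n by apply/eqP; rewrite eqn_leq ltn_ord.
by rewrite modnn web_colour_wrap // -ltnS (leq_trans n_gt6).
Qed.

Lemma web_colouring_proper : proper_colouring (@web_adj n) web_colouring.
Proof.
move=> [l i] [l' j] adj_ij; rewrite -val_eqE /=; move: adj_ij; rewrite /web_adj cyc_adjE.
case/orP=> [/and3P [/eqP <- l_lt2 /orP [] /eqP ->] | spoke].
- exact: web_colour_ordS.
- by rewrite eq_sym -{2}(ord_predK i) web_colour_ordS.
- case/or4P: spoke => /and3P [/eqP <- /eqP -> /eqP ->];
    by rewrite ?web_colour_spoke ?web_colour_pendant //
       eq_sym ?web_colour_spoke ?web_colour_pendant.
Qed.

Lemma web_colouring_b_vertex (t : 'I_5) :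
  exists x, web_colouring x = t /\
    forall j, j != t -> exists y, web_adj x y /\ web_colouring y = j.
Proof.
have t_lt : t.+1 < n by apply: leq_ltn_trans (ltn_ord t) (ltnW n_gt6).
exists (inord 1, Ordinal t_lt); split.
  by apply: val_inj; rewrite /= inordK // web_colour_outerS.
move=> j jt.
suff /mapP [y y_nbr ->] : j \in map web_colouring (web_nbrs (inord 1, Ordinal t_lt)).
  by exists y; rewrite web_adjE.
have t_lt5 := ltn_ord t.
rewrite -(mem_map val_inj) -map_comp /web_nbrs /= !inordK //= modnDr !modn_small ?inordK; try lia.
by apply: web_colour_outer_nbrs; rewrite ?ltn_ord.
Qed.

Lemma web_has_b_colouring5 : has_b_colouring (@web_adj n) 5.
Proof.
by exists web_colouring; split; [exact: web_colouring_proper | exact: web_colouring_b_vertex].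
Qed.

End FiveColouring.

Theorem theorem2p19 (n : nat) : 3 <= n ->
  b_chromatic_number_is (@web_adj n) (if n <= 4 then 4 else 5).
Proof.
move=> n_ge3; split=> [|k]; last exact: web_b_chromatic_le.
case: n n_ge3 => [|[|[|[|[|[|[|m]]]]]]] // _.
- exact: web3_b_colouring.
- exact: web4_b_colouring.
- exact: web5_b_colouring.
- exact: web6_b_colouring.
- exact: web_has_b_colouring5.
Qed.
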